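(* Let $G = H_1 \cup \dots \cup H_k$ be a finite simple graph whose connected components are $H_1,\dots,H_k$, where at most one $H_i$ is isomorphic to $K_1$ and no $H_i$ is isomorphic to $K_2$. Let $P$ be the collection of components $H_i$ with $\det'(H_i) > 0$, let $Q$ be the collection of components $H_i$ with $\det'(H_i) = 0$ (counted with multiplicity, i.e. $|Q|$ is the number of indices $i$ with $\det'(H_i)=0$), and let $R$ be the set of isomorphism classes of graphs occurring in $Q$. Then \[\det'(G) = |Q| - |R| + \sum_{H \in P} \det'(H).\]
   Context: All graphs are finite and simple. An automorphism of $G$ is a bijection $\phi: V(G)\to V(G)$ preserving adjacency and non-adjacency; $\mathrm{Aut}(G)$ is the automorphism group. An automorphism $\phi$ fixes an edge $\{u,v\}$ if $\{\phi(u),\phi(v)\}=\{u,v\}$. For a graph $G$ with at most one isolated vertex and no component isomorphic to $K_2$, an edge subset $T\subseteq E(G)$ is an edge determining set if the only $\phi\in\mathrm{Aut}(G)$ satisfying $\{\phi(u),\phi(v)\}=\{u,v\}$ for all $\{u,v\}\in T$ is the identity; the determining index $\det'(G)$ is the minimum size of an edge determining set (it is $0$ if $G$ has only the trivial automorphism). *)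

(* A finite simple graph is a symmetric irreflexive
   relation e : rel T on a finType T.  Subgraphs induced on a vertex set
   V : {set T} are handled directly: an automorphism of G[V] is a permutation
   of T with support in V (these correspond exactly to bijections of V)
   preserving adjacency and non-adjacency on V. *)
From mathcomp Require Import all_boot fingroup perm.
Set Implicit Arguments. Unset Strict Implicit. Unset Printing Implicit Defensive.

Section Graphs.
Variables (T : finType) (e : rel T).

Definition is_aut (V : {set T}) (s : {perm T}) : bool :=
  perm_on V s && [forall x in V, forall y in V, e (s x) (s y) == e x y].

Definition is_edge (V : {set T}) (X : {set T}) : bool :=
  [exists u in V, exists v in V, e u v && (X == [set u; v])].

Definition edge_det (V : {set T}) (S : {set {set T}}) : bool :=
  [forall X in S, is_edge V X] &&
  [forall s : {perm T},
     (is_aut V s && [forall X in S, s @: X == X]) ==> (s == 1%g)].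

(* determining index det'(G[V]): minimum size of an edge determining set
   (the default value is only reached if no edge determining set exists,
   which cannot happen under the hypotheses of the theorem) *)
Definition det_index (V : {set T}) : nat :=
  \big[minn/#|{set {set T}}|]_(S : {set {set T}} | edge_det V S) #|S|.

Definition components : {set {set T}} :=
  [set [set y | connect e x y] | x : T].

Definition induced_iso (C1 C2 : {set T}) : bool :=
  [exists f : {ffun T -> T},
    [&& [forall x in C1, forall y in C1, (f x == f y) ==> (x == y)],
        f @: C1 == C2 &
        [forall x in C1, forall y in C1, e (f x) (f y) == e x y]]].
End Graphs.

From mathcomp Require Import all_boot fingroup perm action.
Set Implicit Arguments. Unset Strict Implicit. Unset Printing Implicit Defensive.

(* An edge determining set S of G splits along the components: the edges of S
   inside a component H determine H, so there are at least det'(H) of them; and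
   two isomorphic components containing no edge of S could be exchanged by an
   automorphism fixing S, so at most |R| components of Q avoid S.
   Conversely, take a minimum edge determining set of every H in P together with
   one edge of every component of Q except one representative per isomorphism
   class (such a component has an isomorphic twin, so it is not K1 and has an
   edge). An automorphism fixing
   these edges stabilises every component carrying one of them; the image of a
   representative is an isomorphic component, so either the representative
   itself or a stabilised component, which again forces the representative to
   be stabilised. Being trivial on every component, it is the identity. The
   hypotheses on K1 and K2 also make the whole edge set determining, so that
   every determining index involved is a genuine minimum. *)

Lemma card_bigcup_le (I U : finType) (A : {set I}) (F : I -> {set U}) :
  #|\bigcup_(i in A) F i| <= \sum_(i in A) #|F i|.
Proof.
elim/big_rec2: _ => [|i n B _ IH]; first by rewrite cards0.
by rewrite cardsU (leq_trans (leq_subr _ _)) ?leq_add.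
Qed.

Section Classes.
Variables (U : finType) (r : rel U) (D : {set U}).
Hypothesis r_equiv : equivalence_rel r.

Local Notation classes := (equivalence_partition r D).

Let r_equiv_in : {in D & &, equivalence_rel r} := in3W r_equiv.

Let classes_partition : partition classes D.
Proof. exact: equivalence_partitionP r_equiv_in. Qed.

Let pblock_class x : x \in D -> pblock classes x \in classes.
Proof. by move=> xD; apply: pblock_mem; case/and3P: classes_partition => /eqP->. Qed.

Let mem_class x y : x \in D -> y \in D -> (y \in pblock classes x) = r x y.
Proof. exact: (pblock_equivalence_partition r_equiv_in). Qed.

Let pblock_eq x y : x \in D -> y \in D -> (pblock classes x == pblock classes y) = r x y.
Proof.
case/and3P: classes_partition => /eqP coverD tiP _ xD yD.
by rewrite eq_pblock ?coverD // mem_class.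
Qed.

Lemma card_inequivalent_le (A : {set U}) : A \subset D ->
  {in A &, forall x y, r x y -> x = y} -> #|A| <= #|classes|.
Proof.
move=> /subsetP AD Ainj; rewrite -(card_in_imset (f := pblock classes)).
  by apply/subset_leq_card/subsetP => _ /imsetP[x /AD xD ->]; exact: pblock_class.
by move=> x y xA yA /eqP; rewrite pblock_eq ?AD // => /Ainj; apply.
Qed.

Lemma exists_transversal : exists2 X : {set U}, X \subset D &
  [/\ #|X| = #|classes|, {in X &, forall x y, r x y -> x = y}
    & forall x, x \in D -> exists2 y, y \in X & r x y].
Proof.
have trX := transversalP classes_partition; set X := transversal _ _ in trX.
have sXD := transversal_sub trX; have /subsetP XD := sXD.
exists X => //; split; first exact: card_transversal trX.
  move=> x y xX yX rxy; apply: (pblock_inj trX xX yX); apply/eqP.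
  by rewrite pblock_eq ?XD.
move=> x xD; have Bx := pblock_class xD.
have yX := repr_mem_transversal trX x Bx; have yB := repr_mem_pblock trX x Bx.
exists (transversal_repr x X (pblock classes x)) => //.
by rewrite -mem_class // XD.
Qed.

End Classes.

Section Determining.
Variables (T : finType) (e : rel T).
Implicit Types (V X : {set T}) (S : {set {set T}}).

Lemma is_edgeP V X :
  reflect (exists u v, [/\ u \in V, v \in V, e u v & X = [set u; v]]) (is_edge e V X).
Proof.
apply: (iffP exists_inP) => [[u uV /exists_inP[v vV /andP[euv /eqP->]]]|].
  by exists u, v.
case=> u [v [uV vV euv ->]]; exists u => //.
by apply/exists_inP; exists v; rewrite ?euv ?eqxx.
Qed.

Lemma is_edge_sub V X : is_edge e V X -> X \subset V.
Proof.
by case/is_edgeP=> u [v [uV vV _ ->]]; apply/subsetP=> z /set2P[]->.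
Qed.

Lemma is_edge_setT V X : is_edge e V X -> is_edge e setT X.
Proof. by case/is_edgeP=> u [v [_ _ euv XE]]; apply/is_edgeP; exists u, v. Qed.

Lemma is_edge_restrict V X : is_edge e setT X -> X \subset V -> is_edge e V X.
Proof.
case/is_edgeP=> u [v [_ _ euv XE]] /subsetP XV; apply/is_edgeP; exists u, v.
by split=> //; apply: XV; rewrite XE !inE eqxx ?orbT.
Qed.

Lemma is_autP V (s : {perm T}) :
  reflect (perm_on V s /\ {in V &, {mono s : x y / e x y}}) (is_aut e V s).
Proof.
apply: (iffP andP) => [[sV /forall_inP hs]|[sV hs]]; split=> //.
  by move=> x y xV yV; apply/eqP; move/forall_inP: (hs x xV); apply.
by apply/forall_inP=> x xV; apply/forall_inP=> y yV; rewrite hs.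
Qed.

Lemma is_autTP (s : {perm T}) : reflect {mono s : x y / e x y} (is_aut e setT s).
Proof.
apply: (iffP (is_autP _ _)) => [[_ hs] x y|hs]; first exact: hs.
by split=> [|x y _ _]; [apply/subsetP=> x; rewrite inE | exact: hs].
Qed.

Lemma edge_detP V S : reflect
  ({in S, forall X, is_edge e V X} /\
   forall s, is_aut e V s -> {in S, forall X, s @: X = X} -> s = 1%g)
  (edge_det e V S).
Proof.
apply: (iffP andP) => [[/forall_inP SV /forallP hS]|[SV hS]]; split=> //.
- move=> s sV sS; apply/eqP; move/implyP: (hS s); apply.
  by rewrite sV; apply/forall_inP=> X /sS->.
- exact/forall_inP.
- apply/forallP=> s; apply/implyP=> /andP[sV /forall_inP sS]; apply/eqP.
  by apply: hS sV _ => X /sS/eqP.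
Qed.

Lemma edge_det_subset V S S' : edge_det e V S -> S \subset S' ->
  {in S', forall X, is_edge e V X} -> edge_det e V S'.
Proof.
case/edge_detP=> _ hS /subsetP SS' S'V; apply/edge_detP; split=> // s sV sS'.
by apply: hS sV _ => X /SS'/sS'.
Qed.

Lemma det_index_le V S : edge_det e V S -> det_index e V <= #|S|.
Proof.
move=> hS; rewrite /det_index -big_filter.
have : S \in [seq S' <- index_enum _ | edge_det e V S'].
  by rewrite mem_filter hS mem_index_enum.
elim: [seq _ <- _ | _] => //= S' s IH; rewrite inE big_cons => /predU1P[<-|/IH].
  exact: geq_minl.
exact: leq_trans (geq_minr _ _).
Qed.

Lemma det_index_attained V S0 : edge_det e V S0 ->
  exists2 S, edge_det e V S & #|S| = det_index e V.
Proof.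
move=> hS0; have [S hS minS] := arg_minnP (fun S : {set {set T}} => #|S|) hS0.
exists S => //; apply/eqP; rewrite eqn_leq det_index_le // andbT.
rewrite /det_index; elim/big_ind: _ => // [|m n]; last by rewrite leq_min => -> ->.
(* the junk default #|{set {set T}}| of the minimum is no smaller than any #|S| *)
apply: leq_trans (max_card _) _.
exact: leq_card (fun X : {set T} => [set X]) (@set1_inj _).
Qed.

End Determining.

Section Isomorphism.
Variables (T : finType) (e : rel T).
Implicit Types (C D : {set T}) (s : {perm T}).

Lemma injective_on_inverse (A : {set T}) (f : T -> T) : {in A &, injective f} ->
  exists h : T -> T, {in A, cancel f h} /\ {in f @: A, cancel h f}.
Proof.
move=> fi; pose h y := odflt y [pick x in A | f x == y].
have hP y : y \in f @: A -> h y \in A /\ f (h y) = y.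
  case/imsetP=> x xA ->; rewrite /h.
  by case: pickP => [z /andP[zA /eqP]|/(_ x)] //; rewrite xA eqxx.
exists h; split=> [x xA|y /hP[] //].
by have [hxA /fi] := hP _ (imset_f f xA); apply.
Qed.

Lemma induced_isoP C D : reflect
  (exists f : T -> T,
     [/\ {in C &, injective f}, f @: C = D & {in C &, {mono f : x y / e x y}}])
  (induced_iso e C D).
Proof.
apply: (iffP existsP) => [[f /and3P[/forall_inP fi /eqP fC /forall_inP fe]]|[f [fi fC fe]]].
  exists f; split=> // x y xC yC; last by move/forall_inP: (fe x xC) => /(_ y yC)/eqP.
  by move=> fxy; move/forall_inP: (fi x xC) => /(_ y yC); rewrite fxy eqxx => /eqP.
exists [ffun x => f x]; apply/and3P; split.
- apply/forall_inP=> x xC; apply/forall_inP=> y yC; rewrite !ffunE.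
  by apply/implyP=> /eqP/(fi x y xC yC)->.
- by apply/eqP; rewrite -fC; apply: eq_imset => x; rewrite ffunE.
- by apply/forall_inP=> x xC; apply/forall_inP=> y yC; rewrite !ffunE fe.
Qed.

Lemma induced_iso_inverse C D f : {in C &, injective f} -> f @: C = D ->
  {in C &, {mono f : x y / e x y}} ->
  exists h : T -> T, [/\ {in C, cancel f h}, {in D, cancel h f},
                         h @: D = C & {in D &, {mono h : x y / e x y}}].
Proof.
move=> fi fC fe; have [h [fK hK]] := injective_on_inverse fi; rewrite fC in hK.
have hD y : y \in D -> h y \in C by rewrite -fC => /imsetP[x xC ->]; rewrite fK.
exists h; split=> //; first by rewrite -fC -imset_comp (eq_in_imset fK) imset_id.
by move=> x y xD yD; rewrite -fe ?hD ?hK.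
Qed.

Lemma induced_iso_equiv : equivalence_rel (induced_iso e).
Proof.
have iso_sym C D : induced_iso e C D -> induced_iso e D C.
  case/induced_isoP=> f [fi fC fe]; have [h [_ hK hD he]] := induced_iso_inverse fi fC fe.
  by apply/induced_isoP; exists h; split=> //; exact: can_in_inj hK.
have iso_trans C D E : induced_iso e C D -> induced_iso e D E -> induced_iso e C E.
  case/induced_isoP=> f [fi fC fe] /induced_isoP[g [gi gD ge]].
  have fCD x : x \in C -> f x \in D by move=> xC; rewrite -fC imset_f.
  apply/induced_isoP; exists (g \o f); split.
  - by move=> x y xC yC /gi/fi; apply; rewrite ?fCD.
  - by rewrite imset_comp fC.
  - by move=> x y xC yC /=; rewrite ge ?fCD ?fe.
move=> C D E; split.
  by apply/induced_isoP; exists id; split=> //; rewrite imset_id.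
move=> iCD; apply/idP/idP; first by apply: iso_trans; exact: iso_sym.
exact: iso_trans.
Qed.

Lemma induced_iso_card C D : induced_iso e C D -> #|D| = #|C|.
Proof. by case/induced_isoP=> f [fi <- _]; rewrite card_in_imset. Qed.

Lemma aut_induced_iso s C : {mono s : x y / e x y} -> induced_iso e C (s @: C).
Proof.
move=> hs; apply/induced_isoP; exists s.
by split=> [x y _ _|//|x y _ _]; [exact: perm_inj | exact: hs].
Qed.

End Isomorphism.

Section Components.
Variables (T : finType) (e : rel T).
Hypothesis e_sym : symmetric e.
Implicit Types (x y : T) (A C D X : {set T}) (S : {set {set T}}) (s : {perm T}).

Let e_csym : connect_sym e := sym_connect_sym e_sym.

Definition component x := [set y | connect e x y].

Definition edges_in S C := [set X in S | X \subset C].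

Lemma mem_component x : x \in component x.
Proof. by rewrite inE connect0. Qed.

Lemma component_in_components x : component x \in components e.
Proof. exact: imset_f. Qed.

Lemma componentsE C x : C \in components e -> x \in C -> C = component x.
Proof.
case/imsetP=> z _ -> zx; apply/setP=> y; rewrite !inE.
by apply: same_connect; rewrite inE in zx.
Qed.

Lemma components_inhabited C : C \in components e -> exists x, x \in C.
Proof. by case/imsetP=> x _ ->; exists x; exact: mem_component. Qed.

Lemma components_disjoint C D x :
  C \in components e -> D \in components e -> x \in C -> x \in D -> C = D.
Proof. by move=> hC hD xC xD; rewrite (componentsE hC xC) (componentsE hD xD). Qed.

Lemma component_edge C x y : C \in components e -> x \in C -> e x y -> y \in C.
Proof. by move=> hC xC exy; rewrite (componentsE hC xC) inE connect1. Qed.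

Lemma component_sub_closed A x : x \in A ->
  (forall a b, a \in A -> e a b -> b \in A) -> component x \subset A.
Proof.
move=> xA clA; have clA' : closed e A.
  by apply: (intro_closed e_csym) => a b eab /clA; apply.
by apply/subsetP=> y; rewrite inE => /(closed_connect clA') <-.
Qed.

Lemma component_isolated x : e x =1 xpred0 -> component x = [set x].
Proof.
move=> iso; apply/eqP; rewrite eqEsubset sub1set mem_component andbT.
by apply: component_sub_closed => [|a b /set1P->]; rewrite ?inE ?iso.
Qed.

Lemma component_has_edge C : C \in components e -> #|C| != 1 -> exists X, is_edge e C X.
Proof.
move=> hC C1; have [x xC] := components_inhabited hC.
case: (pickP (e x)) => [u exu|iso]; last first.
  by rewrite (componentsE hC xC) component_isolated // cards1 in C1.
by exists [set x; u]; apply/is_edgeP; exists x, u; rewrite xC (component_edge hC xC exu).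
Qed.

Lemma edge_in_component C X x : C \in components e -> is_edge e setT X ->
  x \in X -> x \in C -> X \subset C.
Proof.
move=> hC /is_edgeP[u [v [_ _ euv ->]]] /set2P[]-> xC; apply/subsetP=> z /set2P[]->//.
  exact: component_edge euv.
by apply: (component_edge hC xC); rewrite e_sym.
Qed.

Lemma sum_edges_in_le S : {in S, forall X, is_edge e setT X} ->
  \sum_(C in components e) #|edges_in S C| <= #|S|.
Proof.
move=> Sedge; pose p X := if [pick x in X] is Some x then component x else set0.
rewrite -sum1_card [leqRHS](partition_big p (mem (components e))) => [|X XS]; last first.
  have /is_edgeP[u [v [_ _ _ XE]]] := Sedge X XS.
  rewrite /p; case: pickP => [x _|/(_ u)]; first exact: component_in_components.
  by rewrite XE !inE eqxx.
apply: leq_sum => C hC; rewrite sum1dep_card; apply/subset_leq_card/subsetP => X.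
rewrite !inE => /andP[XS XC]; rewrite XS /p; case: pickP => [x xX|].
  by rewrite -(componentsE hC (subsetP XC x xX)) eqxx.
by have /is_edgeP[u [v [_ _ _ ->]]] := Sedge X XS; move/(_ u); rewrite !inE eqxx.
Qed.

Lemma homo_connect (f : T -> T) :
  {homo f : x y / e x y} -> {homo f : x y / connect e x y}.
Proof.
move=> hf x _ /connectP[p ep ->]; apply/connectP.
by exists (map f p); [exact: homo_path ep | rewrite last_map].
Qed.

Lemma aut_connect s : {mono s : x y / e x y} -> {mono s : x y / connect e x y}.
Proof.
move=> hs x y; apply/idP/idP; last by apply: homo_connect => a b; rewrite hs.
have hsV : {homo s^-1%g : a b / e a b}.
  by move=> a b; rewrite -{1}(permKV s a) -{1}(permKV s b) hs.
by move/(homo_connect hsV); rewrite !permK.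
Qed.

Lemma aut_component s x : {mono s : x y / e x y} -> s @: component x = component (s x).
Proof.
move=> hs; apply/setP=> y; rewrite -{1}(permKV s y) (mem_imset _ _ (@perm_inj _ s)).
by rewrite !inE -(aut_connect hs) permKV.
Qed.

Lemma aut_components s C : {mono s : x y / e x y} ->
  C \in components e -> s @: C \in components e.
Proof. by move=> hs /imsetP[x _ ->]; rewrite aut_component ?component_in_components. Qed.

Lemma aut_stable_component s C X x : {mono s : x y / e x y} -> C \in components e ->
  x \in X -> X \subset C -> s @: X = X -> s @: C = C.
Proof.
move=> hs hC xX /subsetP XC sX; have sxC : s x \in C by rewrite XC // -sX imset_f.
by rewrite {1}(componentsE hC (XC x xX)) aut_component // -(componentsE hC sxC).
Qed.

Lemma aut_of_components (g : {perm T}) :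
  (forall C, C \in components e ->
     g @: C \in components e /\ {in C &, {mono g : x y / e x y}}) ->
  {mono g : x y / e x y}.
Proof.
move=> hg x y; have [gC gmono] := hg _ (component_in_components x).
have [yC|yNC] := boolP (y \in component x); first exact: gmono (mem_component x) yC.
have -> : e x y = false by apply: contraNF yNC; rewrite inE; exact: connect1.
apply: contraNF yNC => egxy.
have gxC : g x \in g @: component x := imset_f _ (mem_component x).
by rewrite -(mem_imset _ _ (@perm_inj _ g)) (componentsE gC gxC) inE connect1.
Qed.

Lemma aut_extend C r : C \in components e -> perm_on C r ->
  {in C &, {mono r : x y / e x y}} -> {mono r : x y / e x y}.
Proof.
move=> hC rC rmono; apply: aut_of_components => D hD.
have [->|nDC] := eqVneq D C; first by rewrite (im_perm_on rC).
have rD : {in D, r =1 id}.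
  move=> x xD; apply: (out_perm rC); apply: contra nDC => xC.
  by rewrite (components_disjoint hD hC xD xC).
by rewrite (eq_in_imset rD) imset_id; split=> // x y xD yD; rewrite !rD.
Qed.

Lemma aut_trivial_on_component s C S : {mono s : x y / e x y} ->
  C \in components e -> s @: C = C -> edge_det e C S ->
  {in S, forall X, s @: X = X} -> {in C, s =1 id}.
Proof.
move=> hs hC sC /edge_detP[SC hS] sS.
have sN : s \in 'N(C | 'P)%g.
  by apply/astabsP=> x; rewrite /aperm -{1}sC (mem_imset _ _ (@perm_inj _ s)).
have rs := restr_permE sN; set r := restr_perm C s in rs.
suff r1 : r = 1%g by move=> x xC; rewrite -rs // r1 perm1.
apply: hS => [|X XS]; last first.
  rewrite -{2}(sS X XS); apply: eq_in_imset => x.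
  by move/(subsetP (is_edge_sub (SC X XS)))/rs.
by apply/is_autP; split=> [|x y xC yC]; rewrite ?restr_perm_on ?rs ?hs.
Qed.

Lemma swap_components C D : C \in components e -> D \in components e -> C != D ->
  induced_iso e C D -> exists g : {perm T},
  [/\ {mono g : x y / e x y}, g @: C = D & {in ~: (C :|: D), g =1 id}].
Proof.
move=> hC hD nCD /induced_isoP[f [fi fC fe]].
have [h [fK hK hC' he]] := induced_iso_inverse fi fC fe.
have fCD x : x \in C -> f x \in D by move=> xC; rewrite -fC imset_f.
have hDC y : y \in D -> h y \in C by move=> yD; rewrite -hC' imset_f.
have notC x : x \in D -> (x \in C) = false.
  by move=> xD; apply: contraNF nCD => xC; rewrite (components_disjoint hC hD xC xD).
pose g x := if x \in C then f x else if x \in D then h x else x.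
have gK : involutive g.
  move=> x; rewrite /g; have [xC|xNC] := boolP (x \in C); first by rewrite notC fCD ?fK.
  by have [xD|xND] := boolP (x \in D); rewrite ?hDC ?hK ?(negbTE xNC) ?(negbTE xND).
have gE : {in C, perm (can_inj gK) =1 f} /\ {in D, perm (can_inj gK) =1 h}.
  by split=> x xA; rewrite permE /g ?xA // notC.
exists (perm (can_inj gK)); split; first apply: aut_of_components => A hA.
- have [->|nAC] := eqVneq A C.
    by rewrite (eq_in_imset gE.1) fC; split=> // x y xC yC; rewrite !gE.1 ?fe.
  have [->|nAD] := eqVneq A D.
    by rewrite (eq_in_imset gE.2) hC'; split=> // x y xD yD; rewrite !gE.2 ?he.
  have gA : {in A, perm (can_inj gK) =1 id}.
    move=> x xA; rewrite permE /g.
    have [xC|_] := ifPn; first by rewrite (components_disjoint hA hC xA xC) eqxx in nAC.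
    by have [xD|//] := ifPn; rewrite (components_disjoint hA hD xA xD) eqxx in nAD.
  by rewrite (eq_in_imset gA) imset_id; split=> // x y xA yA; rewrite !gA.
- by rewrite (eq_in_imset gE.1).
- by move=> x; rewrite !inE negb_or permE /g => /andP[/negbTE-> /negbTE->].
Qed.

Lemma edge_det_restrict S C : edge_det e setT S -> C \in components e ->
  edge_det e C (edges_in S C).
Proof.
case/edge_detP=> Sedge hS hC; apply/edge_detP; split.
  by move=> X; rewrite inE => /andP[/Sedge XT XC]; exact: is_edge_restrict.
move=> r /is_autP[rC rmono] rS; apply: hS => [|X XS]; first exact/is_autTP/(aut_extend hC).
have [XC|XNC] := boolP (X \subset C); first by apply: rS; rewrite inE XS.
rewrite -[RHS]imset_id; apply: eq_in_imset => x xX; apply: (out_perm rC).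
by apply: contra XNC; exact: edge_in_component (Sedge X XS) xX.
Qed.

Lemma edge_free_components_noniso S C D : edge_det e setT S ->
  C \in components e -> D \in components e -> C != D ->
  edges_in S C = set0 -> edges_in S D = set0 -> ~~ induced_iso e C D.
Proof.
case/edge_detP=> Sedge hS hC hD nCD SC0 SD0; apply/negP=> /(swap_components hC hD nCD).
case=> g [gmono gC gid].
have outside A X x : A \in components e -> edges_in S A = set0 ->
    X \in S -> x \in X -> x \notin A.
  move=> hA SA0 XS xX; apply/negP=> /(edge_in_component hA (Sedge X XS) xX) XA.
  by have := in_set0 X; rewrite -SA0 inE XS XA.
suff g1 : g = 1%g by move: nCD; rewrite -gC g1 imset_perm1 eqxx.
apply: hS => [|X XS]; first exact/is_autTP.
rewrite -[RHS]imset_id; apply: eq_in_imset => x xX; apply: gid.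
by rewrite !inE negb_or !(outside _ X).
Qed.

Lemma edge_det_by_components (Q1 : {set {set T}}) S :
  {in S, forall X, is_edge e setT X} ->
  {in Q1 &, forall C D, induced_iso e C D -> C = D} ->
  (forall C, C \in components e -> C \notin Q1 -> exists2 X, X \in S & X \subset C) ->
  (forall C, C \in components e -> edge_det e C (edges_in S C)) ->
  edge_det e setT S.
Proof.
move=> Sedge Q1iso Sout SC; apply/edge_detP; split=> // s /is_autTP hs sS.
have stable_out C : C \in components e -> C \notin Q1 -> s @: C = C.
  move=> hC CQ1; have [X XS XC] := Sout C hC CQ1.
  have /is_edgeP[u [v [_ _ _ XE]]] := Sedge X XS.
  by apply: (aut_stable_component (x := u) hs hC _ XC (sS X XS)); rewrite XE set21.
have stable C : C \in components e -> s @: C = C.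
  move=> hC; have [CQ1|] := boolP (C \in Q1); last exact: stable_out.
  have hsC := aut_components hs hC.
  have [sCQ1|sCQ1] := boolP (s @: C \in Q1).
    by apply/esym/Q1iso => //; exact: aut_induced_iso.
  by apply: (imset_inj (@perm_inj _ s)); rewrite stable_out.
apply/permP=> x; rewrite perm1; have hC := component_in_components x.
apply: (aut_trivial_on_component hs hC (stable _ hC) (SC _ hC) _ (mem_component x)).
by move=> X; rewrite inE => /andP[/sS].
Qed.

End Components.

Section DeterminingIndex.
Variables (T : finType) (e : rel T).
Hypotheses (e_sym : symmetric e) (e_irr : irreflexive e)
  (hK1 : #|[set C in components e | #|C| == 1%N]| <= 1)
  (hK2 : forall C, C \in components e -> #|C| != 2).

Local Notation P := [set C in components e | 0 < det_index e C].
Local Notation Q := [set C in components e | det_index e C == 0%N].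
Local Notation classes := (equivalence_partition (induced_iso e) Q).

Lemma card1_components_eq C D : C \in components e -> D \in components e ->
  #|C| = 1%N -> #|D| = 1%N -> C = D.
Proof.
by move=> hC hD C1 D1; apply: (card_le1_eqP hK1); rewrite inE ?hC ?hD ?C1 ?D1.
Qed.

Lemma iso_components_edge C D : C \in components e -> D \in components e ->
  C != D -> induced_iso e C D -> exists X, is_edge e C X.
Proof.
move=> hC hD nCD /induced_iso_card CD; apply: (component_has_edge e_sym hC).
by apply: contra nCD => /eqP C1; rewrite (card1_components_eq hC hD) // CD.
Qed.

Lemma fix_edges_fix_endpoint (s : {perm T}) x u :
  (forall a b, e a b -> s @: [set a; b] = [set a; b]) -> e x u -> s x = x.
Proof.
move=> sE exu; have img a b : e a b -> s a \in [set a; b].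
  by move=> eab; rewrite -(sE a b eab) imset_f ?set21.
have fix2 a p q : e a p -> e a q -> p != q -> s a = a.
  move=> eap eaq; apply: contraNeq => sa; move: (img _ _ eap) (img _ _ eaq).
  by rewrite !inE (negbTE sa) => /eqP<- /eqP<-.
have xu : x != u by apply: contraTneq exu => ->; rewrite e_irr.
(* otherwise [{x, u}] would be a component isomorphic to K2 *)
have /exists_inP[a aX /exists_inP[b bX eab]] :
    [exists a in [set x; u], exists b in ~: [set x; u], e a b].
  apply: contraTT (hK2 (component_in_components e x)) => /exists_inPn noexit.
  suff -> : component e x = [set x; u] by rewrite negbK cards2 xu.
  apply/eqP; rewrite eqEsubset; apply/andP; split.
    apply: (component_sub_closed e_sym) => [|a b aX eab]; first by rewrite set21.
    by apply: contraTT eab => bX; apply: (exists_inPn (noexit a aX)); rewrite inE.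
  by apply/subsetP=> z /set2P[]->; rewrite inE ?connect0 // connect1.
move: bX; rewrite !inE negb_or => /andP[bx bu].
case/set2P: aX eab => -> eab; first by apply: (fix2 x u b) => //; rewrite eq_sym.
have su : s u = u by apply: (fix2 u x b) => //; [rewrite e_sym | rewrite eq_sym].
have /set2P[//|sx] := img _ _ exu.
by move: xu; rewrite -(perm_inj (etrans sx (esym su))) eqxx.
Qed.

Lemma edges_edge_det : edge_det e setT [set X | is_edge e setT X].
Proof.
apply/edge_detP; split=> [X|s /is_autTP hs sE]; first by rewrite inE.
have sE' a b : e a b -> s @: [set a; b] = [set a; b].
  by move=> eab; apply: sE; rewrite inE; apply/is_edgeP; exists a, b; rewrite !inE.
apply/permP=> x; rewrite perm1.
case: (pickP (e x)) => [u exu|iso_x]; first exact: fix_edges_fix_endpoint exu.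
case: (pickP (e (s x))) => [w esxw|iso_sx].
  by apply: perm_inj; exact: fix_edges_fix_endpoint esxw.
have := card1_components_eq (component_in_components e x) (component_in_components e (s x)).
by rewrite !component_isolated // !cards1 => /(_ erefl erefl)/set1_inj.
Qed.

Lemma det_index_lower S : edge_det e setT S ->
  #|Q| - #|classes| + \sum_(H in P) det_index e H <= #|S|.
Proof.
move=> hS; have [Sedge _] := elimT (edge_detP _ _ _) hS.
pose Q0 := [set C : {set T} | edges_in S C == set0].
have Q0_le : #|Q :&: Q0| <= #|classes|.
  apply: (card_inequivalent_le (induced_iso_equiv e) (subsetIl _ _)) => C D.
  rewrite !inE => /andP[/andP[hC _] /eqP SC0] /andP[/andP[hD _] /eqP SD0].
  apply: contraTeq.
  by move=> nCD; exact (edge_free_components_noniso e_sym hS hC hD nCD SC0 SD0).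
have QD_le : #|Q :\: Q0| <= \sum_(C in Q) #|edges_in S C|.
  rewrite (big_setID Q0) /= -sum1_card; apply: leq_trans (leq_addl _ _) .
  by apply: leq_sum => C; rewrite !inE card_gt0 => /andP[].
have P_le : \sum_(H in P) det_index e H <= \sum_(C in P) #|edges_in S C|.
  apply: leq_sum => C; rewrite inE => /andP[hC _].
  exact/det_index_le/edge_det_restrict.
have PQ_split : \sum_(C in components e) #|edges_in S C| =
    \sum_(C in P) #|edges_in S C| + \sum_(C in Q) #|edges_in S C|.
  rewrite (bigID (fun C => 0 < det_index e C)) /=.
  by congr (_ + _); apply: eq_bigl => C; rewrite !inE // -eqn0Ngt andbC.
apply: leq_trans (sum_edges_in_le e_sym Sedge); rewrite PQ_split addnC.
apply: leq_add P_le _; rewrite -(cardsID Q0) leq_subLR.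
exact: leq_add Q0_le QD_le.
Qed.

Lemma component_min_edge_det C : C \in components e ->
  exists2 S, edge_det e C S & #|S| = det_index e C.
Proof.
by move=> hC; apply: det_index_attained (edge_det_restrict e_sym edges_edge_det hC).
Qed.

Lemma det_index_upper : exists2 S, edge_det e setT S &
  #|S| <= #|Q| - #|classes| + \sum_(H in P) det_index e H.
Proof.
have /fin_all_exists[SC SCP] (C : {set T}) : exists SC,
    C \in components e -> edge_det e C SC /\ #|SC| = det_index e C.
  have [/component_min_edge_det[SC hSC cSC]|_] := boolP (C \in components e).
    by exists SC.
  by exists set0.
have [Q1 Q1Q [cardQ1 Q1iso Q1rep]] := exists_transversal Q (induced_iso_equiv e).
have /fin_all_exists[pe peP] (C : {set T}) : exists X, C \in Q :\: Q1 -> is_edge e C X.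
  have [|_] := boolP (C \in Q :\: Q1); last by exists set0.
  rewrite !inE => /andP[CQ1 /andP[hC C0]].
  have [D DQ1 iCD] : exists2 D, D \in Q1 & induced_iso e C D.
    by apply: Q1rep; rewrite inE hC.
  have /[!inE]/andP[hD _] := subsetP Q1Q D DQ1.
  have nCD : C != D by apply: contraNneq CQ1 => ->.
  by have [X hX] := iso_components_edge hC hD nCD iCD; exists X.
pose S := (\bigcup_(C in P) SC C) :|: pe @: (Q :\: Q1).
have Sedge : {in S, forall X, is_edge e setT X}.
  move=> X; rewrite inE => /orP[/bigcupP[C]|/imsetP[C /peP hX ->]].
    by rewrite inE => /andP[/SCP[/edge_detP[SCedge _] _] _] /SCedge/is_edge_setT.
  exact: is_edge_setT hX.
have SC_sub C : C \in components e -> SC C \subset edges_in S C.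
  move=> hC; have [/edge_detP[SCedge _] cSC] := SCP C hC.
  have [C0|Cpos] := posnP (det_index e C).
    by rewrite (cards0_eq (etrans cSC C0)) sub0set.
  apply/subsetP=> X XSC; rewrite !inE (is_edge_sub (SCedge X XSC)) andbT.
  by apply/orP; left; apply/bigcupP; exists C; rewrite ?inE ?hC.
exists S.
  apply: (edge_det_by_components e_sym Sedge Q1iso) => C hC; last first.
    have [hSC _] := SCP C hC; apply: edge_det_subset hSC (SC_sub C hC) _ => X.
    by rewrite inE => /andP[/Sedge XT XC]; exact: is_edge_restrict.
  move=> CQ1; have [C0|Cpos] := posnP (det_index e C).
    have CQ : C \in Q :\: Q1 by rewrite !inE CQ1 hC C0.
    by exists (pe C); [rewrite inE imset_f ?orbT | exact: is_edge_sub (peP C CQ)].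
  have /card_gt0P[X XSC] : 0 < #|SC C| by rewrite (SCP C hC).2.
  by move: (subsetP (SC_sub C hC) X XSC); rewrite inE => /andP[]; exists X.
rewrite -cardQ1 -(setIidPr Q1Q) -cardsD addnC.
apply: leq_trans (leq_card_setU _ _).1 _; apply: leq_add; last exact: leq_imset_card.
apply: leq_trans (card_bigcup_le _ _) _; apply: eq_leq; apply: eq_bigr => C.
by rewrite inE => /andP[/SCP[_ ->] _].
Qed.

End DeterminingIndex.

Theorem lemma1 (T : finType) (e : rel T)
  (e_sym : symmetric e) (e_irr : irreflexive e)
  (* at most one component isomorphic to K1 *)
  (hK1 : #|[set C in components e | #|C| == 1%N]| <= 1)
  (* no component isomorphic to K2 *)
  (hK2 : forall C, C \in components e -> #|C| != 2) :
  let P := [set C in components e | 0 < det_index e C] in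
  let Q := [set C in components e | det_index e C == 0%N] in
  let R := [set [set D in Q | induced_iso e C D] | C in Q] in
  det_index e [set: T] = (#|Q| - #|R| + \sum_(H in P) det_index e H)%N.
Proof.
move=> P Q R; apply/eqP; rewrite eqn_leq; apply/andP; split.
  have [S hS cS] := det_index_upper e_sym e_irr hK1 hK2.
  exact: leq_trans (det_index_le hS) cS.
have [S hS <-] := det_index_attained (edges_edge_det e_sym e_irr hK1 hK2).
exact: det_index_lower.
Qed.
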